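(* A real symmetric $2\times 2$ matrix is perfect copositive if and only if it is a classical perfect matrix whose off-diagonal entry is negative.
   Context: For $B\in\mathcal{S}^n$ (real symmetric $n\times n$ matrices) write $B[v]=v^\top Bv$. Classical notions: for positive definite $Q$, $\min Q=\min\{Q[v]: v\in\mathbb{Z}^n\setminus\{0\}\}$ and $\operatorname{Min}Q=\{v\in\mathbb{Z}^n: Q[v]=\min Q\}$; a positive definite $Q$ is (classically) perfect if it is the unique $Q'\in\mathcal{S}^n$ with $Q'[v]=\min Q$ for all $v\in\operatorname{Min}Q$. Copositive notions: $\mathcal{COP}^n=\{B\in\mathcal{S}^n: B[x]\ge 0\ \forall x\in\mathbb{R}^n_{\ge0}\}$; $B$ is strictly copositive if it lies in the interior of $\mathcal{COP}^n$; $\min_{\mathcal{COP}}B=\inf\{B[v]: v\in\mathbb{Z}^n_{\ge0}\setminus\{0\}\}$, $\operatorname{Min}_{\mathcal{COP}}B=\{v\in\mathbb{Z}^n_{\ge0}: B[v]=\min_{\mathcal{COP}}B\}$; a strictly copositive $P$ is perfect copositive if it is the unique $Q\in\mathcal{S}^n$ with $Q[v]=\min_{\mathcal{COP}}P$ for all $v\in\operatorname{Min}_{\mathcal{COP}}P$. *)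

From HB Require Import structures.
From mathcomp Require Import all_boot all_order all_algebra.
From mathcomp Require Import classical_sets reals.
Set Implicit Arguments. Unset Strict Implicit. Unset Printing Implicit Defensive.
Import Order.TTheory GRing.Theory Num.Theory.
Local Open Scope ring_scope.
Local Open Scope classical_set_scope.

Section Defs.
Variable R : realType.

Definition symmx n (B : 'M[R]_n) : Prop := B^T = B.

Definition qf n (B : 'M[R]_n) (v : 'cV[R]_n) : R := (v^T *m B *m v) 0 0.

Definition intcv n (v : 'cV[int]_n) : 'cV[R]_n := map_mx (fun z : int => z%:~R) v.

Definition posdef n (Q : 'M[R]_n) : Prop :=
  symmx Q /\ forall x : 'cV[R]_n, x != 0 -> 0 < qf Q x.

(* classical arithmetic minimum (an infimum, attained for positive definite Q) *)
Definition minQ n (Q : 'M[R]_n) : R :=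
  inf [set qf Q (intcv v) | v in [set v : 'cV[int]_n | v != 0]].

Definition MinQ n (Q : 'M[R]_n) : set 'cV[int]_n :=
  [set v | qf Q (intcv v) = minQ Q].

Definition perfect n (Q : 'M[R]_n) : Prop :=
  posdef Q /\
  forall Q' : 'M[R]_n, symmx Q' ->
    (forall v, MinQ Q v -> qf Q' (intcv v) = minQ Q) -> Q' = Q.

Definition copositive n (B : 'M[R]_n) : Prop :=
  symmx B /\ forall x : 'cV[R]_n, (forall i, 0 <= x i 0) -> 0 <= qf B x.

(* interior of COP^n inside S^n (with the entrywise max-norm topology on S^n,
   equivalent to any norm topology on the finite-dimensional space S^n) *)
Definition strictly_copositive n (B : 'M[R]_n) : Prop :=
  symmx B /\ exists eps : R, 0 < eps /\
    forall Q : 'M[R]_n, symmx Q -> (forall i j, `|Q i j - B i j| < eps) ->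
      copositive Q.

Definition nonneg_intcv n (v : 'cV[int]_n) : Prop := forall i, 0 <= v i 0.

Definition minCOP n (B : 'M[R]_n) : R :=
  inf [set qf B (intcv v) | v in [set v : 'cV[int]_n | nonneg_intcv v /\ v != 0]].

Definition MinCOP n (B : 'M[R]_n) : set 'cV[int]_n :=
  [set v | nonneg_intcv v /\ qf B (intcv v) = minCOP B].

Definition perfect_copositive n (P : 'M[R]_n) : Prop :=
  strictly_copositive P /\
  forall Q : 'M[R]_n, symmx Q ->
    (forall v, MinCOP P v -> qf Q (intcv v) = minCOP P) -> Q = P.

End Defs.

From HB Require Import structures.
From mathcomp Require Import all_boot all_order all_algebra.
From mathcomp Require Import classical_sets reals.
From mathcomp Require Import ring lra zify.
Set Implicit Arguments. Unset Strict Implicit. Unset Printing Implicit Defensive.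
Import Order.TTheory GRing.Theory Num.Theory.
Local Open Scope ring_scope.

(* A positive definite 2x2 matrix lies in the interior of the
      copositive cone (an explicit radius det B / (2 tr B) works), and
      conversely a strictly copositive B with b < 0 is positive definite:
      perturbing b downwards keeps B copositive, and copositivity with a
      nonpositive off-diagonal entry forces b^2 <= ac.
   2. Sign of b.  If a perfect copositive B had b >= 0, its copositive minimal
      vectors would lie on the coordinate axes, so B + [[0,1],[1,0]] would take
      the same values on them, contradicting uniqueness.
   3. Minima.  When B is positive definite and b < 0, replacing an integer
      vector by its entrywise absolute value does not increase B[v]; hence
      min B = min_COP B, and every classical minimal vector is, up to sign, a
      copositive minimal vector.  So the two uniqueness conditions coincide. *)

Lemma delta_neq0 (T : nzRingType) n (i : 'I_n) : (delta_mx i 0 : 'cV[T]_n) != 0.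
Proof. by apply/eqP => /matrixP/(_ i 0); rewrite !mxE !eqxx; apply/eqP/oner_neq0. Qed.

Definition absv n (v : 'cV[int]_n) : 'cV[int]_n := map_mx Num.norm v.

Lemma absv_nonneg n (v : 'cV[int]_n) : nonneg_intcv (absv v).
Proof. by move=> i; rewrite mxE normr_ge0. Qed.

Lemma absv_neq0 n (v : 'cV[int]_n) : v != 0 -> absv v != 0.
Proof.
move=> hv; apply: contraNneq hv => /matrixP E; apply/eqP/matrixP => i j.
by have := E i j; rewrite !mxE => /eqP; rewrite normr_eq0 => /eqP.
Qed.

Section GeneralDimension.
Variables (R : realType) (n : nat).
Implicit Types (B : 'M[R]_n) (x : 'cV[R]_n) (v : 'cV[int]_n).

Lemma qfN B x : qf B (- x) = qf B x.
Proof.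
have trN : (- x)^T = - x^T by apply/matrixP => i j; rewrite !mxE.
by rewrite /qf (mulmxN (_ *m B) x) trN (mulNmx x^T B) (mulNmx (x^T *m B) x) opprK.
Qed.

Lemma qf0 B : qf B 0 = 0.
Proof. by rewrite /qf mulmx0 mxE. Qed.

Lemma intcvN v : intcv R (- v) = - intcv R v.
Proof. by apply/matrixP => i j; rewrite !mxE mulrNz. Qed.

Lemma intcv_delta i : intcv R (delta_mx i 0 : 'cV[int]_n) = delta_mx i 0.
Proof. by apply/matrixP => k j; rewrite !mxE; case: (_ && _). Qed.

Lemma qf_delta B i : qf B (delta_mx i 0) = B i i.
Proof. by rewrite /qf trmx_delta -rowE -colE !mxE. Qed.

Lemma delta_nonneg i : nonneg_intcv (delta_mx i 0 : 'cV[int]_n).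
Proof. by move=> k; rewrite mxE; case: (_ && _). Qed.

Lemma posdef_qf_ge0 B x : posdef B -> 0 <= qf B x.
Proof.
case=> _ hpos; have [->|/hpos/ltW//] := eqVneq x 0.
by rewrite qf0.
Qed.

Lemma posdef_copositive B : posdef B -> copositive B.
Proof. by move=> hB; split; [case: hB | move=> x _; apply: posdef_qf_ge0]. Qed.

Lemma strictly_copositive_copositive B : strictly_copositive B -> copositive B.
Proof. by case=> hB [eps [he hcop]]; apply: hcop => // i j; rewrite subrr normr0. Qed.

(* min Q is a lower bound of Q on nonzero integer vectors (the value set is
   bounded below by 0, so the infimum is a genuine lower bound). *)
Lemma minQ_le B v : posdef B -> v != 0 -> minQ B <= qf B (intcv R v).
Proof.
move=> hB hv; apply: ge_inf; last by exists v.
by exists 0 => _ [w _ <-]; apply: posdef_qf_ge0.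
Qed.

Lemma minCOP_le B v : copositive B -> nonneg_intcv v -> v != 0 ->
  minCOP B <= qf B (intcv R v).
Proof.
move=> [_ hcop] hv0 hv; apply: ge_inf; last by exists v.
by exists 0 => _ [w [hw _] <-]; apply: hcop => i; rewrite mxE ler0z.
Qed.

Lemma strictly_copositive_dir B S : strictly_copositive B -> symmx S ->
  (forall i j, `|S i j| <= 1) -> exists2 d, 0 < d & copositive (B - d *: S).
Proof.
case=> hB [eps [he hcop]] hS hS1; exists (eps / 2); first by rewrite divr_gt0.
apply: hcop => [|i j].
  by rewrite /symmx linearB linearZ /= hB hS.
rewrite !mxE addrAC subrr add0r normrN normrM (gtr0_norm (divr_gt0 he _)) //.
by have := hS1 i j; have := normr_ge0 (S i j); nra.
Qed.

(* Strictly copositive matrices have a positive diagonal: B - d I is still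
   copositive for some d > 0, and B[e_i] = B_ii. *)
Lemma strictly_copositive_diag_gt0 B i : strictly_copositive B -> 0 < B i i.
Proof.
move=> hB.
have sym1 : symmx (1%:M : 'M[R]_n) by rewrite /symmx tr_scalar_mx.
have bnd1 : forall j k, `|(1%:M : 'M[R]_n) j k| <= 1.
  by move=> j k; rewrite mxE; case: (j == k); rewrite ?normr1 ?normr0.
have [d hd [_ hcop]] := strictly_copositive_dir hB sym1 bnd1.
have : 0 <= qf (B - d *: 1%:M) (delta_mx i 0).
  by apply: hcop => k; rewrite mxE; case: (_ && _).
by rewrite qf_delta !mxE eqxx mulr1; lra.
Qed.

End GeneralDimension.

Lemma ord2 (i : 'I_2) : i = 0 \/ i = 1.
Proof. by case: i => [[|[|//]] Hi]; [left | right]; apply/val_inj. Qed.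

Section Dimension2.
Variable R : realType.
Implicit Types (B : 'M[R]_2) (x : 'cV[R]_2) (v : 'cV[int]_2).

Lemma qf2 B x : symmx B ->
  qf B x = B 0 0 * x 0 0 ^+ 2 + 2 * B 0 1 * x 0 0 * x 1 0 + B 1 1 * x 1 0 ^+ 2.
Proof.
move=> hB; have B10 : B 1 0 = B 0 1 by rewrite -{1}hB mxE.
rewrite /qf !mxE !big_ord_recl !big_ord0 !mxE !big_ord_recl !big_ord0 !mxE /=.
have -> : (ord0 : 'I_2) = 0 by apply/val_inj.
have -> : (lift ord0 ord0 : 'I_2) = 1 by apply/val_inj.
have -> : (0 : 'I_1) = ord0 by apply/val_inj.
by rewrite B10; ring.
Qed.

Lemma qf2_intcv B v : symmx B -> qf B (intcv R v) =
  B 0 0 * (v 0 0)%:~R ^+ 2 + 2 * B 0 1 * (v 0 0)%:~R * (v 1 0)%:~R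
  + B 1 1 * (v 1 0)%:~R ^+ 2.
Proof. by move=> hB; rewrite qf2 // !mxE. Qed.

Definition cv2 (s t : R) : 'cV[R]_2 := \col_i (if i == 0 then s else t).

Lemma qf2_cv2 B s t : symmx B ->
  qf B (cv2 s t) = B 0 0 * s ^+ 2 + 2 * B 0 1 * s * t + B 1 1 * t ^+ 2.
Proof. by move=> hB; rewrite qf2 // !mxE. Qed.

Lemma cv2_neq0 s t : t != 0 -> cv2 s t != 0.
Proof. by move=> ht; apply: contraNneq ht => /matrixP/(_ 1 0); rewrite !mxE /= => ->. Qed.

Lemma cv2_normsq_gt0 x : x != 0 -> 0 < x 0 0 ^+ 2 + x 1 0 ^+ 2.
Proof.
move=> hx; rewrite lt_def addr_ge0 ?sqr_ge0 // andbT paddr_eq0 ?sqr_ge0 //.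
rewrite !sqrf_eq0; apply: contra hx => /andP[/eqP x0 /eqP x1].
by apply/eqP/matrixP => i j; rewrite (ord1 j) mxE; case: (ord2 i) => ->.
Qed.

Lemma qf2_trace_identity B x : symmx B ->
  (B 0 0 + B 1 1) * qf B x = (B 0 0 * B 1 1 - B 0 1 ^+ 2) * (x 0 0 ^+ 2 + x 1 0 ^+ 2)
    + (B 0 0 * x 0 0 + B 0 1 * x 1 0) ^+ 2 + (B 0 1 * x 0 0 + B 1 1 * x 1 0) ^+ 2.
Proof. by move=> hB; rewrite qf2 //; ring. Qed.

Lemma qf2_trace_lb B x : symmx B ->
  (B 0 0 * B 1 1 - B 0 1 ^+ 2) * (x 0 0 ^+ 2 + x 1 0 ^+ 2) <= (B 0 0 + B 1 1) * qf B x.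
Proof.
move=> hB; rewrite qf2_trace_identity // -addrA lerDl.
by rewrite addr_ge0 ?sqr_ge0.
Qed.

Lemma det_pos_gt0 (a b c : R) : 0 < a -> 0 < a * c - b ^+ 2 -> 0 < c.
Proof. by move=> ha; rewrite subr_gt0 => /(le_lt_trans (sqr_ge0 _)); rewrite pmulr_rgt0. Qed.

(* Sylvester's criterion in dimension 2; the test vectors are e_1 and
   (b, -a), at which B takes the values a and a (ac - b^2). *)
Lemma posdef2P B : symmx B ->
  posdef B <-> 0 < B 0 0 /\ 0 < B 0 0 * B 1 1 - B 0 1 ^+ 2.
Proof.
move=> hB; split=> [[_ hpos] | [ha hdet]].
  have ha : 0 < B 0 0 by rewrite -qf_delta hpos ?delta_neq0.
  have na : - B 0 0 != 0 by rewrite oppr_eq0 lt0r_neq0.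
  split=> //; have := hpos _ (cv2_neq0 (B 0 1) na).
  rewrite qf2_cv2 // => h.
  by rewrite -(pmulr_rgt0 _ ha); move: h; congr (0 < _); ring.
split=> // x hx.
rewrite -(pmulr_rgt0 _ (addr_gt0 ha (det_pos_gt0 ha hdet))).
exact: lt_le_trans (mulr_gt0 hdet (cv2_normsq_gt0 hx)) (qf2_trace_lb _ hB).
Qed.

Lemma quad_perturb_lb (e u w z s t : R) : `|u| <= e -> `|w| <= e -> `|z| <= e ->
  - (2 * e) * (s ^+ 2 + t ^+ 2) <= u * s ^+ 2 + 2 * w * s * t + z * t ^+ 2.
Proof.
rewrite !ler_norml => /andP[u1 u2] /andP[w1 w2] /andP[z1 z2].
have k0 : 0 <= (e + u) * s ^+ 2 by rewrite mulr_ge0 ?sqr_ge0 //; lra.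
have k1 : 0 <= (e + z) * t ^+ 2 by rewrite mulr_ge0 ?sqr_ge0 //; lra.
have k2 : 0 <= (e + w) * (s + t) ^+ 2 by rewrite mulr_ge0 ?sqr_ge0 //; lra.
have k3 : 0 <= (e - w) * (s - t) ^+ 2 by rewrite mulr_ge0 ?sqr_ge0 //; lra.
nra.
Qed.

(* Positive definite 2x2 matrices are strictly copositive: every symmetric
   Q with |Q_ij - B_ij| < det B / (2 tr B) is even positive semidefinite. *)
Lemma posdef2_strictly_copositive B : posdef B -> strictly_copositive B.
Proof.
move=> hpd; have hB := hpd.1; have [ha hdet] := (posdef2P hB).1 hpd.
set det := B 0 0 * B 1 1 - B 0 1 ^+ 2 in hdet.
have htr : 0 < B 0 0 + B 1 1 by rewrite addr_gt0 // (det_pos_gt0 ha hdet).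
set eps := det / (2 * (B 0 0 + B 1 1)).
have heps : 0 < eps by rewrite divr_gt0 // mulr_gt0.
have epsE : (B 0 0 + B 1 1) * (2 * eps) = det.
  by rewrite /eps; field; rewrite lt0r_neq0.
split=> //; exists eps; split=> // Q hQ hnear; split=> // x _.
set N := x 0 0 ^+ 2 + x 1 0 ^+ 2.
have hpert := quad_perturb_lb (x 0 0) (x 1 0)
  (ltW (hnear 0 0)) (ltW (hnear 0 1)) (ltW (hnear 1 1)).
rewrite -/N -(ler_pM2l htr) mulrA mulrN epsE in hpert.
have := qf2_trace_lb x hB; rewrite -(pmulr_rge0 _ htr) !qf2 // -/N -/det.
lra.
Qed.

(* A copositive B with c > 0 and b <= 0 satisfies b^2 <= ac (test vector
   (c, -b), where B takes the value c (ac - b^2)). *)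
Lemma copositive2_det B : copositive B -> 0 < B 1 1 -> B 0 1 <= 0 ->
  B 0 1 ^+ 2 <= B 0 0 * B 1 1.
Proof.
move=> [hB hcop] hc hb.
have hx : forall i, 0 <= cv2 (B 1 1) (- B 0 1) i 0.
  by move=> i; rewrite mxE; case: (ord2 i) => -> /=; [apply: ltW | rewrite oppr_ge0].
have := hcop _ hx; rewrite qf2_cv2 // => h.
by rewrite -subr_ge0 -(pmulr_rge0 _ hc); nra.
Qed.

Definition offdiag2 : 'M[R]_2 := \matrix_(i, j) (i != j)%:R.

Lemma offdiag2_sym : symmx offdiag2.
Proof. by apply/matrixP => i j; rewrite !mxE eq_sym. Qed.

Lemma offdiag2_bound i j : `|offdiag2 i j| <= 1.
Proof. by rewrite mxE; case: (i != j); rewrite ?normr1 ?normr0. Qed.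

(* A strictly copositive B with b < 0 is positive definite: lowering b to
   b - d keeps B copositive, so ac >= (b - d)^2 > b^2. *)
Lemma strictly_copositive2_posdef B : strictly_copositive B -> B 0 1 < 0 -> posdef B.
Proof.
move=> hsc hb; have hB := hsc.1.
have [ha hc] := (strictly_copositive_diag_gt0 0 hsc, strictly_copositive_diag_gt0 1 hsc).
have [d hd hcop] := strictly_copositive_dir hsc offdiag2_sym offdiag2_bound.
set B' := B - d *: offdiag2.
have B'00 : B' 0 0 = B 0 0 by rewrite !mxE /= mulr0 subr0.
have B'01 : B' 0 1 = B 0 1 - d by rewrite !mxE /= mulr1.
have B'11 : B' 1 1 = B 1 1 by rewrite !mxE /= mulr0 subr0.
have hdet : (B 0 1 - d) ^+ 2 <= B 0 0 * B 1 1.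
  by rewrite -B'00 -B'01 -B'11 copositive2_det // ?B'11 ?B'01 //; lra.
by apply/(posdef2P hB); split=> //; nra.
Qed.

(* If a, c > 0 and b >= 0, copositive minimal vectors lie on the axes: a
   vector with both coordinates >= 1 has value >= a + c > a >= min_COP B. *)
Lemma MinCOP2_axes B v : copositive B -> 0 < B 0 0 -> 0 < B 1 1 -> 0 <= B 0 1 ->
  MinCOP B v -> v 0 0 * v 1 0 = 0.
Proof.
move=> hcop ha hc hb [hv hmin]; have hB := hcop.1; apply/eqP/negPn/negP.
rewrite mulf_eq0 negb_or => /andP[p0 q0].
have hmin_a : minCOP B <= B 0 0.
  by have := minCOP_le hcop (delta_nonneg 0) (delta_neq0 _ 0); rewrite intcv_delta qf_delta.
move: hmin; rewrite qf2_intcv //.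
set p := (v 0 0)%:~R : R; set q := (v 1 0)%:~R : R => hmin.
have p1 : 1 <= p by rewrite ler1z; have := hv 0; lia.
have q1 : 1 <= q by rewrite ler1z; have := hv 1; lia.
have hp2 : B 0 0 <= B 0 0 * p ^+ 2 by rewrite ler_pMr //; nra.
have hq2 : B 1 1 <= B 1 1 * q ^+ 2 by rewrite ler_pMr //; nra.
have hpq : 0 <= 2 * B 0 1 * p * q by rewrite -mulrA mulr_ge0 ?mulr_ge0 //; lra.
lra.
Qed.

(* A perfect copositive 2x2 matrix has a negative off-diagonal entry;
   otherwise B + offdiag2 agrees with B on Min_COP B. *)
Lemma perfect_copositive2_offdiag_neg B : perfect_copositive B -> B 0 1 < 0.
Proof.
case=> hsc huniq; have hcop := strictly_copositive_copositive hsc.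
have [hB _] := hcop; have ha := strictly_copositive_diag_gt0 0 hsc.
have hc := strictly_copositive_diag_gt0 1 hsc.
rewrite ltNge; apply/negP => hb.
have hQ : symmx (B + offdiag2) by rewrite /symmx linearD /= hB offdiag2_sym.
suff /matrixP/(_ 0 1) : B + offdiag2 = B by rewrite !mxE /=; lra.
apply: huniq => // v hv; rewrite -hv.2 !qf2_intcv //.
have cross0 (k : R) : 2 * k * (v 0 0)%:~R * (v 1 0)%:~R = 0.
  by rewrite -mulrA -intrM (MinCOP2_axes hcop ha hc hb hv) mulr0.
by rewrite !mxE /= !addr0 !cross0.
Qed.

Lemma qf2_absv B v : symmx B ->
  qf B (intcv R (absv v)) = qf B (intcv R v)
    + 2 * B 0 1 * (`|(v 0 0)%:~R * (v 1 0)%:~R| - (v 0 0)%:~R * (v 1 0)%:~R).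
Proof.
move=> hB; rewrite !qf2_intcv // !mxE !intr_norm !real_normK ?num_real // normrM.
ring.
Qed.

Lemma qf2_absv_le B v : symmx B -> B 0 1 < 0 ->
  qf B (intcv R (absv v)) <= qf B (intcv R v).
Proof.
move=> hB hb; rewrite qf2_absv // gerDl mulr_le0_ge0 ?subr_ge0 ?ler_norm //.
lra.
Qed.

Lemma minQ2_eq_minCOP B : posdef B -> B 0 1 < 0 -> minQ B = minCOP B.
Proof.
move=> hpd hb; have hB := hpd.1; have hcop := posdef_copositive hpd.
set e0 : 'cV[int]_2 := delta_mx 0 0.
have e0_nonneg : nonneg_intcv e0 := delta_nonneg 0.
have e0_neq0 : e0 != 0 := delta_neq0 _ 0.
apply/le_anti/andP; split; apply: lb_le_inf.
- by exists (qf B (intcv R e0)); exists e0.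
- by move=> _ [v [_ hv] <-]; apply: minQ_le.
- by exists (qf B (intcv R e0)); exists e0.
move=> _ [v hv <-]; apply: le_trans (qf2_absv_le v hB hb).
exact: minCOP_le hcop (absv_nonneg v) (absv_neq0 hv).
Qed.

(* ... and every classical minimal vector is, up to sign, a copositive one:
   a vector with coordinates of opposite signs would have |v| strictly below
   the minimum. *)
Lemma MinQ2_MinCOP B v : posdef B -> B 0 1 < 0 ->
  MinQ B v -> MinCOP B v \/ MinCOP B (- v).
Proof.
move=> hpd hb hv; have hB := hpd.1; have hcop := posdef_copositive hpd.
rewrite /MinQ /= minQ2_eq_minCOP // in hv.
have pq_ge0 : 0 <= v 0 0 * v 1 0.
  rewrite leNgt; apply/negP => pq_lt0.
  have hv0 : v != 0 by apply: contraTneq pq_lt0 => ->; rewrite !mxE mul0r ltxx.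
  have := minCOP_le hcop (absv_nonneg v) (absv_neq0 hv0).
  have pqR : (v 0 0)%:~R * (v 1 0)%:~R < 0 :> R by rewrite -intrM ltrz0.
  rewrite qf2_absv // hv ltr0_norm //; nra.
case: (boolP ((0 <= v 0 0) && (0 <= v 1 0))) => [/andP[p0 q0] | hneg].
  by left; split=> // i; case: (ord2 i) => ->.
right; split; last by rewrite intcvN qfN.
have [p0 q0] : v 0 0 <= 0 /\ v 1 0 <= 0.
  by move: hneg; rewrite negb_and -!ltNge => /orP[] h; split; nia.
by move=> i; rewrite mxE oppr_ge0; case: (ord2 i) => ->.
Qed.

End Dimension2.

Theorem theorem4p1 (R : realType) (B : 'M[R]_2) :
  symmx B ->
  (perfect_copositive B <-> perfect B /\ B 0 1 < 0).
Proof.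
move=> hB; split=> [hpc | [[hpd huniq] hb]].
- have hb := perfect_copositive2_offdiag_neg hpc.
  have hpd := strictly_copositive2_posdef hpc.1 hb.
  split=> //; split=> // Q hQ hmin; apply: hpc.2 => // v [hv hval].
  by rewrite -minQ2_eq_minCOP //; apply: hmin; rewrite /MinQ /= minQ2_eq_minCOP.
- split; first exact: posdef2_strictly_copositive.
  move=> Q hQ hmin; apply: huniq => // v /(MinQ2_MinCOP hpd hb).
  rewrite minQ2_eq_minCOP // => -[/hmin // | /hmin].
  by rewrite intcvN qfN.
Qed.
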